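(* Let $\mathbf L$ be an algebraic lattice with an equa-interior operator $\eta$ satisfying property (I9). Let $x$, $a_i$ and $z_i$ ($i\in I$, $I$ an arbitrary index set) be coatoms of $\mathbf L$ with $x\wedge z_i\le a_i$ properly for all $i\in I$. If $\bigwedge_{i\in I}a_i\not\le x$, then $\bigwedge_{i\in I}z_i\not\le x$.
   Context: An equa-interior operator on an algebraic lattice $\mathbf L$ is a map $\eta:L\to L$ such that for all $x,y,z\in L$: (I1) $\eta(x)\le x$; (I2) $x\ge y$ implies $\eta(x)\ge\eta(y)$; (I3) $\eta^2(x)=\eta(x)$; (I4) $\eta(1)=1$; (I5) if $\eta(x)=u$ for all $x\in X\subseteq L$ then $\eta(\bigvee X)=u$; (I6) $\eta(x)\vee(y\wedge z)=(\eta(x)\vee y)\wedge(\eta(x)\vee z)$; (I7) the image $\eta(L)$ is the complete join subsemilattice of $L$ generated by the elements of $\eta(L)$ that are compact in $\mathbf L$; (I8) there is a compact element $w\in L$ with $\eta(w)=w$ such that the interval $[w,1]$ is isomorphic to the congruence lattice of a join semilattice with $0$. Define $\tau(y)=\bigvee\{u\in L:\eta(u)=\eta(y)\}$. Property (I9): for any index set $J$ and elements $x,c,z_j$ ($j\in J$) of $L$, if $\eta(x)\le c$ and $\bigwedge_{j\in J}\tau(z_j)\le\tau(c)$, then $\eta(\eta(x)\vee\bigwedge_{j\in J}\tau(x\wedge z_j))\le c$. For coatoms, ''$x\wedge z\le a$ properly'' means $x\wedge z\le a$ while $x\not\le a$ and $z\not\le a$. *)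

From Stdlib Require Import List.

Record CompleteLattice := {
  carrier :> Type;
  le : carrier -> carrier -> Prop;
  sup : (carrier -> Prop) -> carrier;
  le_refl : forall x, le x x;
  le_trans : forall x y z, le x y -> le y z -> le x z;
  le_antisym : forall x y, le x y -> le y x -> x = y;
  sup_ub : forall (X : carrier -> Prop) x, X x -> le x (sup X);
  sup_least : forall (X : carrier -> Prop) u, (forall x, X x -> le x u) -> le (sup X) u
}.

Section Ops.
Context {L : CompleteLattice}.

Definition inf (X : L -> Prop) : L := sup L (fun y => forall x, X x -> le L y x).
Definition join2 (x y : L) : L := sup L (fun u => u = x \/ u = y).
Definition meet2 (x y : L) : L := inf (fun u => u = x \/ u = y).
Definition top : L := sup L (fun _ => True).
Definition bigjoin {J : Type} (f : J -> L) : L := sup L (fun u => exists j, u = f j).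
Definition bigmeet {J : Type} (f : J -> L) : L := inf (fun u => exists j, u = f j).

Definition compact (c : L) : Prop :=
  forall X : L -> Prop, le L c (sup L X) ->
    exists l : list L, (forall y, In y l -> X y) /\ le L c (sup L (fun y => In y l)).

Definition algebraic : Prop :=
  forall x : L, x = sup L (fun c => compact c /\ le L c x).

Definition coatom (x : L) : Prop :=
  x <> top /\ forall y, le L x y -> y = x \/ y = top.

Definition properly_below (x z a : L) : Prop :=
  le L (meet2 x z) a /\ ~ le L x a /\ ~ le L z a.
End Ops.

Record JoinSemilattice0 := {
  js_carrier :> Type;
  js_join : js_carrier -> js_carrier -> js_carrier;
  js_zero : js_carrier;
  js_assoc : forall x y z, js_join x (js_join y z) = js_join (js_join x y) z;
  js_comm : forall x y, js_join x y = js_join y x;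
  js_idem : forall x, js_join x x = x;
  js_zero_l : forall x, js_join js_zero x = x
}.

Definition is_congruence (S : JoinSemilattice0) (th : S -> S -> Prop) : Prop :=
  (forall x, th x x) /\
  (forall x y, th x y -> th y x) /\
  (forall x y z, th x y -> th y z -> th x z) /\
  (forall x y u v, th x y -> th u v -> th (js_join S x u) (js_join S y v)).

Definition interval_iso_Con {L : CompleteLattice} (w : L) (S : JoinSemilattice0) : Prop :=
  exists f : L -> (S -> S -> Prop),
    (forall x, le L w x -> is_congruence S (f x)) /\
    (forall x y, le L w x -> le L w y ->
       (le L x y <-> (forall s t, f x s t -> f y s t))) /\
    (forall th, is_congruence S th ->
       exists x, le L w x /\ forall s t, f x s t <-> th s t).

Section Eta.
Context {L : CompleteLattice} (eta : L -> L).

Definition equa_interior : Prop :=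
  (* (I1) *) (forall x, le L (eta x) x) /\
  (* (I2) *) (forall x y, le L y x -> le L (eta y) (eta x)) /\
  (* (I3) *) (forall x, eta (eta x) = eta x) /\
  (* (I4) *) eta top = top /\
  (* (I5) *) (forall (X : L -> Prop) (u : L), (exists x, X x) ->
                (forall x, X x -> eta x = u) -> eta (sup L X) = u) /\
  (* (I6) *) (forall x y z, join2 (eta x) (meet2 y z) = meet2 (join2 (eta x) y) (join2 (eta x) z)) /\
  (* (I7) *) (forall y, (exists x, y = eta x) <->
                exists Y : L -> Prop,
                  (forall c, Y c -> compact c /\ exists x, c = eta x) /\ y = sup L Y) /\
  (* (I8) *) (exists w : L, compact w /\ eta w = w /\
                exists S : JoinSemilattice0, interval_iso_Con w S).

Definition tau (y : L) : L := sup L (fun u => eta u = eta y).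

Definition prop_I9 : Prop :=
  forall (J : Type) (x c : L) (z : J -> L),
    le L (eta x) c ->
    le L (bigmeet (fun j => tau (z j))) (tau c) ->
    le L (eta (join2 (eta x) (bigmeet (fun j => tau (meet2 x (z j)))))) c.
End Eta.

(* The hypotheses force [tau] to be the identity on coatoms and to send each
   [x /\ z_i] to [a_i]: distributivity (I6) puts [eta a_i] below both [x] and
   [z_i], so [x /\ z_i] and [a_i] have the same interior.  If the [z_i] met
   below [x], then (I9), applied with [c = eta x], would give
   [eta (eta x \/ /\ a_i) <= eta x], i.e. [eta x \/ /\ a_i <= tau x = x]. *)
From Stdlib Require Import FunctionalExtensionality.

Section LatticeFacts.
Context {L : CompleteLattice}.

Lemma inf_lb (X : L -> Prop) x : X x -> le L (inf X) x.
Proof. intro Hx. apply sup_least. intros y Hy. exact (Hy x Hx). Qed.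

Lemma inf_glb (X : L -> Prop) y : (forall x, X x -> le L y x) -> le L y (inf X).
Proof. intro H. exact (sup_ub L (fun y => forall x, X x -> le L y x) y H). Qed.

Lemma join2_ubl (x y : L) : le L x (join2 x y).
Proof. apply sup_ub. auto. Qed.

Lemma join2_ubr (x y : L) : le L y (join2 x y).
Proof. apply sup_ub. auto. Qed.

Lemma join2_least (x y u : L) : le L x u -> le L y u -> le L (join2 x y) u.
Proof. intros Hx Hy. apply sup_least. intros w [-> | ->]; assumption. Qed.

Lemma meet2_lbl (x y : L) : le L (meet2 x y) x.
Proof. apply inf_lb. auto. Qed.

Lemma meet2_lbr (x y : L) : le L (meet2 x y) y.
Proof. apply inf_lb. auto. Qed.

Lemma meet2_glb (x y u : L) : le L u x -> le L u y -> le L u (meet2 x y).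
Proof. intros Hx Hy. apply inf_glb. intros w [-> | ->]; assumption. Qed.

Lemma le_top (x : L) : le L x top.
Proof. apply sup_ub. exact I. Qed.

Lemma coatom_le_or_join_top (c y : L) :
  coatom c -> le L y c \/ join2 y c = top.
Proof.
  intros [_ Hc]. destruct (Hc _ (join2_ubr y c)) as [E | E]; auto.
  left. rewrite <- E. apply join2_ubl.
Qed.

End LatticeFacts.

Section InteriorOperator.
Context {L : CompleteLattice} (eta : L -> L).
Hypothesis eta_le : forall x, le L (eta x) x.
Hypothesis eta_mono : forall x y, le L y x -> le L (eta y) (eta x).
Hypothesis eta_idem : forall x, eta (eta x) = eta x.
Hypothesis eta_top : eta top = top.
Hypothesis eta_sup_const : forall (X : L -> Prop) (u : L), (exists x, X x) ->
  (forall x, X x -> eta x = u) -> eta (sup L X) = u.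
Hypothesis eta_distr : forall x y z,
  join2 (eta x) (meet2 y z) = meet2 (join2 (eta x) y) (join2 (eta x) z).

Lemma le_tau (y : L) : le L y (tau eta y).
Proof. apply sup_ub. reflexivity. Qed.

Lemma eta_tau (y : L) : eta (tau eta y) = eta y.
Proof. apply eta_sup_const; [exists y |]; auto. Qed.

Lemma tau_eta (y : L) : tau eta (eta y) = tau eta y.
Proof. unfold tau. rewrite eta_idem. reflexivity. Qed.

Lemma tau_coatom (c : L) : coatom c -> tau eta c = c.
Proof.
  intros [Hc Hmax]. destruct (Hmax _ (le_tau c)) as [E | E]; auto.
  exfalso. apply Hc. apply le_antisym; [apply le_top |].
  rewrite <- eta_top, <- E, eta_tau. apply eta_le.
Qed.

Lemma le_tau_of_eta (x y : L) :
  le L (eta x) y -> le L (eta y) (eta x) -> le L y (tau eta x).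
Proof.
  intros Hxy Hyx. apply sup_ub. apply le_antisym; auto.
  rewrite <- eta_idem. auto.
Qed.

Section ProperlyBelow.
Variables x z a : L.
Hypotheses (Hx : coatom x) (Hz : coatom z) (Ha : coatom a).
Hypothesis Hxza : properly_below x z a.

Lemma eta_coatom_below_properly : le L (eta a) x /\ le L (eta a) z.
Proof.
  destruct Hxza as [Hm [Hxa Hza]].
  (* by (I6), [eta a \/ x] and [eta a \/ z] meet below [a], so neither is [top] *)
  assert (Hdistr : le L (meet2 (join2 (eta a) x) (join2 (eta a) z)) a).
  { rewrite <- eta_distr. apply join2_least; auto. }
  split.
  - destruct (coatom_le_or_join_top x (eta a) Hx) as [H | E]; auto.
    exfalso. apply Hza. eapply le_trans; [| exact Hdistr].
    apply meet2_glb; [rewrite E; apply le_top | apply join2_ubr].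
  - destruct (coatom_le_or_join_top z (eta a) Hz) as [H | E]; auto.
    exfalso. apply Hxa. eapply le_trans; [| exact Hdistr].
    apply meet2_glb; [apply join2_ubr | rewrite E; apply le_top].
Qed.

Lemma eta_meet_properly : eta (meet2 x z) = eta a.
Proof.
  destruct eta_coatom_below_properly as [Hax Haz].
  apply le_antisym; [apply eta_mono, Hxza |].
  rewrite <- eta_idem. apply eta_mono, meet2_glb; assumption.
Qed.

Lemma tau_meet_properly : tau eta (meet2 x z) = a.
Proof.
  rewrite <- (tau_coatom a Ha). unfold tau. rewrite eta_meet_properly.
  reflexivity.
Qed.

End ProperlyBelow.
End InteriorOperator.

Theorem theorem7p6 (L : CompleteLattice) (eta : L -> L)
  (Halg : algebraic (L := L)) (Heta : equa_interior eta) (H9 : prop_I9 eta)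
  (I : Type) (x : L) (a z : I -> L)
  (Hx : coatom x) (Ha : forall i, coatom (a i)) (Hz : forall i, coatom (z i))
  (Hprop : forall i, properly_below x (z i) (a i)) :
  ~ le L (bigmeet a) x -> ~ le L (bigmeet z) x.
Proof.
  destruct Heta as [I1 [I2 [I3 [I4 [I5 [I6 _]]]]]].
  intros Hax Hzx. apply Hax.
  assert (Htau_z : (fun j => tau eta (z j)) = z).
  { apply functional_extensionality. intro j. now apply tau_coatom. }
  assert (Htau_xz : (fun j => tau eta (meet2 x (z j))) = a).
  { apply functional_extensionality. intro j.
    now apply tau_meet_properly; auto. }
  assert (Hc : le L (bigmeet (fun j => tau eta (z j))) (tau eta (eta x))).
  { rewrite Htau_z, tau_eta by assumption.
    eapply le_trans; [exact Hzx | apply le_tau]. }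
  pose proof (H9 I x (eta x) z (le_refl L _) Hc) as Heta_join.
  rewrite Htau_xz in Heta_join.
  assert (Hjoin : le L (join2 (eta x) (bigmeet a)) (tau eta x)).
  { apply le_tau_of_eta; auto. apply join2_ubl. }
  rewrite (tau_coatom eta I1 I4 I5 x Hx) in Hjoin.
  eapply le_trans; [apply join2_ubr | exact Hjoin].
Qed.
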